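(* Let $X$ be an $\mathcal M$-set, let $A\subset\omega$ be co-infinite, and let $x\in X$ be supported on $A$. Then: (1) if $f,g\in\mathcal M$ agree on $A$, then $f.x=g.x$; (2) for every $f\in\mathcal M$, $f.x$ is supported on $f(A)$; (3) if $f\in\mathcal M$ and $A'\subset A$ are such that $f.x$ is supported on $f(A')$, then $x$ is supported on $A'$.
   Context: $\omega=\{1,2,3,\dots\}$, $\mathcal M$ the monoid of injections $\omega\to\omega$; an $\mathcal M$-set is a set with left $\mathcal M$-action. For $A\subset\omega$, $\mathcal M_A$ is the submonoid of injections fixing $A$ elementwise, and $x$ is supported on $A$ if $f.x=x$ for all $f\in\mathcal M_A$. $A$ is co-infinite if $\omega\setminus A$ is infinite. *)

From Stdlib Require Import Arith.

(* omega = {1,2,3,...} is modelled by nat (relabel n+1 <-> n); the statement is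
   invariant under this bijection. *)
Definition omega := nat.

Record Inj := mkInj { ifun :> omega -> omega; ifun_inj : forall a b, ifun a = ifun b -> a = b }.

Definition id_inj : Inj := mkInj (fun n => n) (fun a b h => h).
Definition comp_inj (f g : Inj) : Inj.
Proof.
  refine (mkInj (fun n => f (g n)) _).
  intros a b h. apply (ifun_inj g), (ifun_inj f), h.
Defined.

Record MSet := {
  carrier :> Type;
  act : Inj -> carrier -> carrier;
  act_id : forall x, act id_inj x = x;
  act_comp : forall (f g : Inj) x, act (comp_inj f g) x = act f (act g x)
}.

Definition subset (A B : omega -> Prop) := forall a, A a -> B a.

Definition fixes (A : omega -> Prop) (f : Inj) := forall a, A a -> f a = a.
Definition supported_on (X : MSet) (A : omega -> Prop) (x : X) :=
  forall f : Inj, fixes A f -> act X f x = x.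

Definition coinfinite (A : omega -> Prop) := forall n : omega, exists m, n <= m /\ ~ A m.

Definition image (f : Inj) (A : omega -> Prop) : omega -> Prop :=
  fun y => exists a, A a /\ f a = y.

From Stdlib Require Import List Arith Lia Classical ClassicalEpsilon FinFun
  FunctionalExtensionality ProofIrrelevance.

(* Since A is co-infinite, so is f(A) for every injection f, so f can be
   extended off A to a permutation u of omega.  Then u^-1 o g fixes A for every
   g agreeing with f on A, whence g.x = u.x; and conjugation by u carries
   injections fixing A' to injections fixing f(A'), which transports supports
   back and forth. *)

Definition infinite (P : nat -> Prop) := forall n, exists m, n <= m /\ P m.

Lemma injective_unbounded (h : nat -> nat) : Injective h -> forall n, exists k, n <= h k.
Proof.
  intros h_inj n. apply NNPP; intro h_bounded.
  assert (h_lt : forall k, h k < n).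
  { intro k. destruct (Nat.lt_ge_cases (h k) n); auto. exfalso; eauto. }
  assert (len := NoDup_incl_length (Injective_map_NoDup h_inj (seq_NoDup (S n) 0))
                   (l' := seq 0 n)).
  rewrite length_map, !length_seq in len.
  enough (S n <= n) by lia.
  apply len. intros y (k & <- & _)%in_map_iff. apply in_seq. specialize (h_lt k). lia.
Qed.

Lemma cancel_injective (r s : nat -> nat) : (forall n, s (r n) = n) -> Injective r.
Proof. intros rK a b E. now rewrite <- (rK a), <- (rK b), E. Qed.

Definition inv_of (h : nat -> nat) (m : nat) : nat :=
  epsilon (inhabits 0) (fun n => h n = m).

Lemma inv_of_range (h : nat -> nat) (m : nat) :
  (exists n, h n = m) -> h (inv_of h m) = m.
Proof. exact (epsilon_spec (inhabits 0) (fun n => h n = m)). Qed.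

Lemma inv_of_cancel (h : nat -> nat) : Injective h -> forall n, inv_of h (h n) = n.
Proof. intros h_inj n. apply h_inj, inv_of_range. now exists n. Qed.

Section Enumeration.

Variable P : nat -> Prop.
Hypothesis P_infinite : infinite P.

Definition least_in_from (k : nat) : nat :=
  epsilon (inhabits 0) (fun m => k <= m /\ P m /\ forall j, k <= j -> P j -> m <= j).

Lemma least_in_from_spec (k : nat) :
  k <= least_in_from k /\ P (least_in_from k) /\
  forall j, k <= j -> P j -> least_in_from k <= j.
Proof.
  apply (epsilon_spec (inhabits 0)
           (fun m => k <= m /\ P m /\ forall j, k <= j -> P j -> m <= j)).
  destruct (dec_inh_nat_subset_has_unique_least_element (fun m => k <= m /\ P m))
    as (m & ((k_le & Pm) & m_least) & _).
  - intro n; apply classic.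
  - destruct (P_infinite k) as [m Hm]; eauto.
  - exists m; repeat split; auto.
Qed.

Fixpoint enum_infinite (n : nat) : nat :=
  match n with
  | 0 => least_in_from 0
  | S n => least_in_from (S (enum_infinite n))
  end.

Lemma enum_infinite_in (n : nat) : P (enum_infinite n).
Proof. destruct n; apply least_in_from_spec. Qed.

Lemma enum_infinite_lt_succ (n : nat) : enum_infinite n < enum_infinite (S n).
Proof. apply least_in_from_spec. Qed.

Lemma enum_infinite_increasing (a b : nat) : a < b -> enum_infinite a < enum_infinite b.
Proof.
  induction 1 as [|b _ IH]; [apply enum_infinite_lt_succ|].
  specialize (enum_infinite_lt_succ b). lia.
Qed.

Lemma enum_infinite_injective : Injective enum_infinite.
Proof.
  intros a b E.
  destruct (Nat.lt_trichotomy a b) as [lt|[eq|lt]];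
    auto; apply enum_infinite_increasing in lt; lia.
Qed.

Lemma enum_infinite_ge (n : nat) : n <= enum_infinite n.
Proof. induction n; [lia|]. specialize (enum_infinite_lt_succ n). lia. Qed.

Lemma enum_infinite_surjective (m : nat) : P m -> exists n, enum_infinite n = m.
Proof.
  intros Pm.
  enough (below : forall k, m <= enum_infinite k -> exists n, enum_infinite n = m)
    by exact (below m (enum_infinite_ge m)).
  induction k as [|k IH]; intros m_le.
  - exists 0. destruct (least_in_from_spec 0) as (_ & _ & least).
    specialize (least m (Nat.le_0_l m) Pm). simpl in *. lia.
  - destruct (Nat.le_gt_cases m (enum_infinite k)) as [le|gt]; [now apply IH|].
    exists (S k). destruct (least_in_from_spec (S (enum_infinite k))) as (_ & _ & least).
    specialize (least m gt Pm). simpl in *. lia.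
Qed.

End Enumeration.

Lemma coinfinite_image (A : omega -> Prop) (f : Inj) : coinfinite A -> coinfinite (image f A).
Proof.
  intros A_coinf n.
  set (e := enum_infinite (fun n => ~ A n)).
  destruct (injective_unbounded (fun k => f (e k))) with n as [k le].
  { intros a b E. now apply (enum_infinite_injective _ A_coinf), (ifun_inj f). }
  exists (f (e k)). split; [exact le|].
  intros (a & Aa & E). apply (ifun_inj f) in E. subst a.
  exact (enum_infinite_in _ A_coinf k Aa).
Qed.

Definition transfer (P Q : nat -> Prop) (n : nat) : nat :=
  enum_infinite Q (inv_of (enum_infinite P) n).

Lemma transfer_cancel (P Q : nat -> Prop) :
  infinite P -> infinite Q ->
  forall n, P n -> Q (transfer P Q n) /\ transfer Q P (transfer P Q n) = n.
Proof.
  intros P_inf Q_inf n Pn. unfold transfer. split; [now apply enum_infinite_in|].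
  rewrite inv_of_cancel by now apply enum_infinite_injective.
  now apply inv_of_range, enum_infinite_surjective.
Qed.

Definition piecewise (A : nat -> Prop) (f g : nat -> nat) (n : nat) : nat :=
  if excluded_middle_informative (A n) then f n else g n.

Lemma piecewise_cancel (A B : nat -> Prop) (f f' g g' : nat -> nat) :
  (forall a, A a -> B (f a) /\ f' (f a) = a) ->
  (forall a, ~ A a -> ~ B (g a) /\ g' (g a) = a) ->
  forall n, piecewise B f' g' (piecewise A f g n) = n.
Proof.
  intros f_cancel g_cancel n. unfold piecewise at 2.
  destruct (excluded_middle_informative (A n)) as [An|nAn].
  - destruct (f_cancel n An) as [Bfn fK].
    unfold piecewise. now destruct (excluded_middle_informative (B (f n))).
  - destruct (g_cancel n nAn) as [nBgn gK].
    unfold piecewise. now destruct (excluded_middle_informative (B (g n))).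
Qed.

Lemma extend_to_permutation (A : omega -> Prop) (f : Inj) :
  coinfinite A ->
  exists u v : Inj, (forall a, A a -> u a = f a) /\
    (forall n, v (u n) = n) /\ (forall n, u (v n) = n).
Proof.
  intros A_coinf.
  assert (B_coinf := coinfinite_image A f A_coinf).
  set (B := image f A) in B_coinf.
  set (u := piecewise A f (transfer (fun n => ~ A n) (fun m => ~ B m))).
  set (v := piecewise B (inv_of f) (transfer (fun m => ~ B m) (fun n => ~ A n))).
  assert (f_cancel : forall a, A a -> B (f a) /\ inv_of f (f a) = a).
  { intros a Aa. split; [now exists a|apply inv_of_cancel; exact (ifun_inj f)]. }
  assert (vu : forall n, v (u n) = n).
  { apply piecewise_cancel; [exact f_cancel|].
    exact (transfer_cancel _ _ A_coinf B_coinf). }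
  assert (uv : forall m, u (v m) = m).
  { apply piecewise_cancel; [|exact (transfer_cancel _ _ B_coinf A_coinf)].
    intros b (a & Aa & <-). now rewrite inv_of_cancel by exact (ifun_inj f). }
  exists (mkInj u (cancel_injective u v vu)), (mkInj v (cancel_injective v u uv)).
  repeat split; auto.
  intros a Aa. simpl. unfold u, piecewise.
  now destruct (excluded_middle_informative (A a)).
Qed.

Lemma Inj_ext (f g : Inj) : (forall n, f n = g n) -> f = g.
Proof.
  destruct f as [f ?], g as [g ?]. simpl. intro E.
  assert (f = g) by now apply functional_extensionality.
  subst g. f_equal. apply proof_irrelevance.
Qed.

Lemma act_ext (X : MSet) (f g : Inj) (x : X) :
  (forall n, f n = g n) -> act X f x = act X g x.
Proof. intro E. now rewrite (Inj_ext f g E). Qed.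

Section Support.

Variables (X : MSet) (A : omega -> Prop) (x : X).
Hypotheses (A_coinfinite : coinfinite A) (x_supported : supported_on X A x).

Lemma act_eq_of_agree_on_support (f g : Inj) :
  (forall a, A a -> f a = g a) -> act X f x = act X g x.
Proof.
  intros fg.
  destruct (extend_to_permutation A f A_coinfinite) as (u & v & uf & vu & uv).
  assert (act_u : forall h : Inj, (forall a, A a -> h a = f a) -> act X h x = act X u x).
  { intros h hf.
    rewrite (act_ext X h (comp_inj u (comp_inj v h))) by (intro n; simpl; now rewrite uv).
    rewrite act_comp, (x_supported (comp_inj v h)); [reflexivity|].
    intros a Aa. simpl. now rewrite hf, <- uf, vu. }
  rewrite (act_u f), (act_u g); auto.
  intros a Aa. now rewrite fg.
Qed.

Lemma supported_on_image (f : Inj) : supported_on X (image f A) (act X f x).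
Proof.
  intros k k_fixes. rewrite <- act_comp.
  apply act_eq_of_agree_on_support. intros a Aa. simpl.
  apply k_fixes. now exists a.
Qed.

Lemma supported_on_of_image (f : Inj) (A' : omega -> Prop) :
  subset A' A -> supported_on X (image f A') (act X f x) -> supported_on X A' x.
Proof.
  intros A'_sub fx_supported k k_fixes.
  destruct (extend_to_permutation A f A_coinfinite) as (u & v & uf & vu & _).
  assert (x_eq : x = act X v (act X f x)).
  { rewrite <- act_comp, <- (act_id X x) at 1.
    apply act_eq_of_agree_on_support. intros a Aa. simpl. now rewrite <- uf, vu. }
  set (k' := comp_inj u (comp_inj k v)).
  assert (k'_fixes : fixes (image f A') k').
  { intros n (a & A'a & <-). simpl.
    now rewrite <- (uf a (A'_sub a A'a)), vu, (k_fixes a A'a). }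
  transitivity (act X v (act X k' (act X f x))).
  - rewrite x_eq at 1. rewrite <- !act_comp.
    apply act_ext. intro n. simpl. now rewrite vu.
  - now rewrite (fx_supported k' k'_fixes).
Qed.

End Support.

Theorem lemma1p3 (X : MSet) (A : omega -> Prop) (x : X) :
  coinfinite A -> supported_on X A x ->
  (forall f g : Inj, (forall a, A a -> f a = g a) -> act X f x = act X g x) /\
  (forall f : Inj, supported_on X (image f A) (act X f x)) /\
  (forall (f : Inj) (A' : omega -> Prop), subset A' A ->
     supported_on X (image f A') (act X f x) -> supported_on X A' x).
Proof.
  intros A_coinf x_supp. repeat split.
  - now apply act_eq_of_agree_on_support.
  - now apply supported_on_image.
  - now apply supported_on_of_image.
Qed.
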